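(* Let $(G,<_X,k)$ be an instance of \textsc{One-Sided $k$-Planarity} with $G=(X\cup Y,E)$. If $G$ contains a vertex $v\in X$ with $\deg(v)>2k+2$ that has a leaf neighbor $y\in Y$, then $(G,<_X,k)$ is a YES-instance if and only if $(G-y,<_X,k)$ is a YES-instance.
   Context: A leaf is a vertex with exactly one neighbor. A 2-layer drawing of a bipartite graph $G=(X\cup Y,E)$ ($X\cap Y=\emptyset$, $E\subseteq X\times Y$) is a pair $(<_X,<_Y)$ of strict linear orders on $X$ and $Y$. Edges $\{x,y\},\{x',y'\}$ with $x\ne x'\in X$, $y\ne y'\in Y$ cross if $x<_Xx'$ and $y'<_Yy$. The drawing is $k$-planar if every edge crosses at most $k$ edges. \textsc{One-Sided $k$-Planarity}: given a bipartite graph $(X\cup Y,E)$, an integer $k\ge0$ and a linear order $<_X$ of $X$, decide whether there is a linear order $<_Y$ of $Y$ with $(<_X,<_Y)$ a 2-layer $k$-planar drawing; a YES-instance is one for which the answer is yes. *)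

From mathcomp Require Import all_boot.
Set Implicit Arguments. Unset Strict Implicit. Unset Printing Implicit Defensive.

(* A bipartite graph is given by vertex sets VX : {set TX}, VY : {set TY}
   (TX, TY finite types, hence disjoint) and an adjacency relation
   E : TX -> TY -> bool; the edges are the pairs (x,y) with x \in VX,
   y \in VY and E x y. *)

Definition strict_linear_on (T : finType) (S : {set T}) (r : rel T) : Prop :=
  [/\ (forall x, x \in S -> ~~ r x x),
      (forall x y z, x \in S -> y \in S -> z \in S -> r x y -> r y z -> r x z)
    & (forall x y, x \in S -> y \in S -> x != y -> r x y || r y x)].

Definition is_edge (TX TY : finType) (VX : {set TX}) (VY : {set TY})
  (E : TX -> TY -> bool) (e : TX * TY) : bool :=
  [&& e.1 \in VX, e.2 \in VY & E e.1 e.2].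

Definition cross_ord (TX TY : finType) (ltX : rel TX) (ltY : rel TY)
  (e f : TX * TY) : bool :=
  [&& e.1 != f.1, e.2 != f.2, ltX e.1 f.1 & ltY f.2 e.2].

Definition crosses (TX TY : finType) (ltX : rel TX) (ltY : rel TY)
  (e f : TX * TY) : bool :=
  cross_ord ltX ltY e f || cross_ord ltX ltY f e.

Definition k_planar (TX TY : finType) (VX : {set TX}) (VY : {set TY})
  (E : TX -> TY -> bool) (ltX : rel TX) (ltY : rel TY) (k : nat) : Prop :=
  forall e, is_edge VX VY E e ->
    #|[set f | is_edge VX VY E f && crosses ltX ltY e f]| <= k.

Definition yes_instance (TX TY : finType) (VX : {set TX}) (VY : {set TY})
  (E : TX -> TY -> bool) (ltX : rel TX) (k : nat) : Prop :=
  exists ltY : rel TY, strict_linear_on VY ltY /\ k_planar VX VY E ltX ltY k.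

Definition degX (TX TY : finType) (VY : {set TY}) (E : TX -> TY -> bool) (v : TX) : nat :=
  #|[set y in VY | E v y]|.

From mathcomp Require Import all_boot.
From mathcomp Require Import zify.
Set Implicit Arguments. Unset Strict Implicit.

(* Removing y from a k-planar drawing of G leaves one of G - y.  Conversely,
   take a k-planar drawing of G - y, let t be the neighbour of v with exactly
   k + 1 other neighbours of v below it, and put y immediately below t.  Then
   at least k + 1 neighbours of v lie on each side of y.  An edge (x, w)
   crossing (v, y) with x left of v has w above y, so it also crosses the
   k + 1 edges from v to the neighbours below y; symmetrically if x is right
   of v.  So (v, y) is uncrossed and all other crossings are unchanged. *)

Section StrictLinearOrder.
Variables (T : finType) (r : rel T).

Lemma strict_linear_onS (A B : {set T}) :
  B \subset A -> strict_linear_on A r -> strict_linear_on B r.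
Proof.
move=> /subsetP sBA [irr tr tot].
split=> [x /sBA | x y z /sBA + /sBA + /sBA | x y /sBA + /sBA].
- exact: irr.
- exact: tr.
- exact: tot.
Qed.

Definition rank_in (S : {set T}) (u : T) : nat := #|[set w in S | r w u]|.

Lemma rank_in_lt (S : {set T}) (a b : T) : strict_linear_on S r ->
  a \in S -> b \in S -> r a b -> rank_in S a < rank_in S b.
Proof.
move=> [irr tr _] aS bS rab; apply: proper_card; apply/properP; split.
  apply/subsetP => w; rewrite !inE => /andP[wS rwa].
  by rewrite wS (tr w a b wS aS bS).
by exists a; rewrite !inE ?aS ?rab ?(negbTE (irr a aS)).
Qed.

Lemma rank_in_surj (S : {set T}) (n : nat) : strict_linear_on S r ->
  n < #|S| -> exists2 t, t \in S & rank_in S t = n.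
Proof.
move=> lin ltnS; have [irr _ tot] := lin.
have rank_inj : {in S &, injective (rank_in S)}.
  move=> a b aS bS eq_ab; apply/eqP; apply: contraT => neq_ab.
  case/orP: (tot a b aS bS neq_ab) => [rab | rba].
  - by have := rank_in_lt lin aS bS rab; rewrite eq_ab ltnn.
  - by have := rank_in_lt lin bS aS rba; rewrite eq_ab ltnn.
have rank_small u : u \in S -> rank_in S u < #|S|.
  move=> uS; apply: proper_card; apply/properP; split.
    by apply/subsetP => w; rewrite inE => /andP[].
  by exists u; rewrite // inE (negbTE (irr u uS)) andbF.
set ranks := [seq rank_in S u | u <- enum S].
have [_ eq_ranks] : (size ranks = size (iota 0 #|S|)) * (ranks =i iota 0 #|S|).
  apply: uniq_min_size.
  - rewrite /ranks map_inj_in_uniq ?enum_uniq // => a b.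
    by rewrite !mem_enum; exact: rank_inj.
  - by move=> m /mapP[u]; rewrite mem_enum mem_iota => /rank_small lt_u ->.
  - by rewrite size_iota size_map cardE.
have /mapP[t] : n \in ranks by rewrite eq_ranks mem_iota.
by rewrite mem_enum => tS ->; exists t.
Qed.

Lemma strict_lt_neq (A : {set T}) (a b : T) :
  strict_linear_on A r -> a \in A -> r a b -> a != b.
Proof. by move=> [irr _ _] aA; apply: contraTneq => <-; apply: irr. Qed.

Definition insert_before (y t : T) : rel T := fun a b =>
  if a == y then (b != y) && ((b == t) || r t b)
  else if b == y then r a t else r a b.

Lemma insert_before_id (y t a b : T) :
  a != y -> b != y -> insert_before y t a b = r a b.
Proof. by rewrite /insert_before => /negbTE-> /negbTE->. Qed.

Lemma strict_linear_insert_before (A : {set T}) (y t : T) :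
  strict_linear_on A r -> t \in A -> strict_linear_on (y |: A) (insert_before y t).
Proof.
move=> [irr tr tot] tA.
have inA a : a \in y |: A -> a != y -> a \in A.
  by rewrite in_setU1 => /predU1P[->|]; rewrite ?eqxx.
rewrite /insert_before; split=> [a aA|a b c aA bA cA|a b aA bA neq_ab].
- by case: eqVneq => [//|ay]; rewrite (negbTE (irr a (inA a aA ay))).
- case: (eqVneq a y) => [_|ay]; case: (eqVneq b y) => [_|/(inA b bA) {}bA] //=;
    case: (eqVneq c y) => [_|/(inA c cA) {}cA] //=.
  + case/predU1P=> [-> | rtb]; last move=> /(tr _ _ _ tA bA tA rtb);
      by rewrite (negbTE (irr t tA)).
  + by case/predU1P=> [-> -> | rtb /(tr _ _ _ tA bA cA rtb) ->]; rewrite orbT.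
  + by move=> rat /predU1P[-> // | ]; apply: tr (inA a aA ay) tA cA rat.
  + exact: tr (inA a aA ay) bA tA.
  + exact: tr (inA a aA ay) bA cA.
- case: (eqVneq a y) => [ea|ay]; case: (eqVneq b y) => [eb|/(inA b bA) {}bA] /=.
  + by rewrite ea eb eqxx in neq_ab.
  + have [-> // | neq_bt] := eqVneq b t.
    by apply: tot; rewrite // eq_sym.
  + have [-> | neq_at] := eqVneq a t; first by rewrite orbT.
    exact: tot (inA a aA ay) tA neq_at.
  + exact: tot (inA a aA ay) bA neq_ab.
Qed.

End StrictLinearOrder.

Section Drawing.
Variables (TX TY : finType) (VX : {set TX}) (E : TX -> TY -> bool) (ltX : rel TX).

Lemma crossesC (ltY : rel TY) (e f : TX * TY) :
  crosses ltX ltY e f = crosses ltX ltY f e.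
Proof. exact: orbC. Qed.

Lemma k_planarS (VY VY' : {set TY}) (ltY : rel TY) (k : nat) :
  VY' \subset VY -> k_planar VX VY E ltX ltY k -> k_planar VX VY' E ltX ltY k.
Proof.
move=> /subsetP sVY kp e.
have edgeS f : is_edge VX VY' E f -> is_edge VX VY E f.
  by case/and3P=> fX /sVY fY Ef; rewrite /is_edge fX fY Ef.
move=> /edgeS /kp; apply: leq_trans; apply: subset_leq_card.
by apply/subsetP => f; rewrite !inE => /andP[/edgeS -> ->].
Qed.

Lemma eq_in_k_planar (VY : {set TY}) (ltY ltY' : rel TY) (k : nat) :
  {in VY &, ltY =2 ltY'} -> k_planar VX VY E ltX ltY k -> k_planar VX VY E ltX ltY' k.
Proof.
move=> eq_lt kp e ee; apply: leq_trans _ (kp e ee); apply: subset_leq_card.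
apply/subsetP => f; rewrite !inE => /andP[fe]; rewrite fe.
case/and3P: ee => _ e2 _; case/and3P: fe => _ f2 _.
by rewrite /crosses /cross_ord -!eq_lt.
Qed.

Lemma fan_crossings_le (VY : {set TY}) (ltY : rel TY) (k : nat) (e : TX * TY)
    (v : TX) (U : {set TY}) :
  k_planar VX VY E ltX ltY k -> is_edge VX VY E e -> v \in VX ->
  U \subset [set u in VY | E v u] -> {in U, forall u, crosses ltX ltY e (v, u)} ->
  #|U| <= k.
Proof.
move=> kp ee vX /subsetP sU crossU; apply: leq_trans _ (kp e ee).
have pair_inj : injective (pair v : TY -> TX * TY) by move=> a b [].
rewrite -(card_imset _ pair_inj); apply: subset_leq_card.
apply/subsetP => _ /imsetP[u uU ->]; have := sU u uU.
by rewrite !inE /is_edge /= vX crossU // => /andP[-> ->].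
Qed.

Lemma fan_around_uncrossed (VY : {set TY}) (ltY : rel TY) (k : nat) (v : TX) (y : TY)
    (f : TX * TY) :
  strict_linear_on VY ltY -> y \in VY -> v \in VX ->
  k_planar VX (VY :\ y) E ltX ltY k ->
  k < #|[set u in VY :\ y | E v u & ltY u y]| ->
  k < #|[set u in VY :\ y | E v u & ltY y u]| ->
  is_edge VX (VY :\ y) E f -> ~~ crosses ltX ltY (v, y) f.
Proof.
move=> lin yY vX kp many_below many_above; have [_ tr _] := lin.
case: f => x w fe; have /and3P[_ /setD1P[_ wY] _] := fe.
have fan_sub (P : pred TY) :
    [set u in VY :\ y | E v u & P u] \subset [set u in VY :\ y | E v u].
  by apply/subsetP => u; rewrite !inE => /and3P[-> -> _].
apply/negP; rewrite /crosses /cross_ord /=.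
case/orP=> [/and4P[neq_vx _ lt_vx lt_wy] | /and4P[neq_xv _ lt_xv lt_yw]].
- move: many_above; rewrite ltnNge => /negP; apply.
  apply: fan_crossings_le kp fe vX (fan_sub _) _ => u.
  rewrite !inE => /and3P[/andP[_ uY] _ lt_yu].
  have lt_wu := tr w y u wY yY uY lt_wy lt_yu.
  have neq_wu := strict_lt_neq lin wY lt_wu.
  by rewrite /crosses /cross_ord /= neq_vx (eq_sym u) neq_wu lt_vx lt_wu orbT.
- move: many_below; rewrite ltnNge => /negP; apply.
  apply: fan_crossings_le kp fe vX (fan_sub _) _ => u.
  rewrite !inE => /and3P[/andP[_ uY] _ lt_uy].
  have lt_uw := tr u y w uY yY wY lt_uy lt_yw.
  have neq_uw := strict_lt_neq lin uY lt_uw.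
  by rewrite /crosses /cross_ord /= neq_xv (eq_sym w) neq_uw lt_xv lt_uw.
Qed.

Lemma k_planar_add_leaf (VY : {set TY}) (ltY : rel TY) (k : nat) (v : TX) (y : TY) :
  [set x in VX | E x y] = [set v] ->
  k_planar VX (VY :\ y) E ltX ltY k ->
  (forall f, is_edge VX (VY :\ y) E f -> ~~ crosses ltX ltY (v, y) f) ->
  k_planar VX VY E ltX ltY k.
Proof.
move=> leaf_y kp uncrossed.
have edge_split e : is_edge VX VY E e -> e = (v, y) \/ is_edge VX (VY :\ y) E e.
  case: e => x w /and3P[/= xX wY Exw]; case: (eqVneq w y) => [ewy | wy]; [left | right].
    have : x \in [set x in VX | E x y] by rewrite inE xX -ewy.
    by rewrite leaf_y inE ewy => /eqP->.
  by rewrite /is_edge /= xX in_setD1 wy wY.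
move=> e /edge_split[-> | ee].
- suff -> : [set f | is_edge VX VY E f && crosses ltX ltY (v, y) f] = set0 by rewrite cards0.
  apply/setP => f; rewrite !inE; apply/negbTE/negP => /andP[/edge_split[-> | fe]].
  + by rewrite /crosses /cross_ord eqxx.
  + exact/negP/uncrossed.
- apply: leq_trans _ (kp e ee); apply: subset_leq_card; apply/subsetP => f.
  rewrite !inE => /andP[/edge_split[-> | -> //] cross_ef].
  by move: (uncrossed e ee); rewrite crossesC cross_ef.
Qed.

Lemma yes_instance_add_leaf (VY : {set TY}) (k : nat) (v : TX) (y : TY) :
  v \in VX -> y \in VY -> [set x in VX | E x y] = [set v] ->
  2 * k + 1 < #|[set u in VY :\ y | E v u]| ->
  yes_instance VX (VY :\ y) E ltX k -> yes_instance VX VY E ltX k.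
Proof.
move=> vX yY leaf_y big_fan [ltY [lin kp]].
set S := [set u in VY :\ y | E v u] in big_fan.
have S_sub : S \subset VY :\ y by apply/subsetP => u; rewrite inE => /andP[].
have [t tS rank_t] : exists2 t, t \in S & rank_in ltY S t = k.+1.
  by apply: rank_in_surj; [exact: strict_linear_onS lin | lia].
pose ltY' := insert_before ltY y t.
have lin' : strict_linear_on VY ltY'.
  by rewrite -(setD1K yY); apply: strict_linear_insert_before (subsetP S_sub t tS).
have kp' : k_planar VX (VY :\ y) E ltX ltY' k.
  apply: eq_in_k_planar kp => a b /setD1P[neq_ay _] /setD1P[neq_by _].
  by rewrite /ltY' insert_before_id.
set below := [set u in VY :\ y | E v u & ltY' u y].
set above := [set u in VY :\ y | E v u & ltY' y u].
have card_below : #|below| = k.+1.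
  rewrite -rank_t; apply: eq_card => u; rewrite !inE.
  by case: eqVneq => //= neq_uy; rewrite /ltY' /insert_before (negbTE neq_uy) eqxx andbA.
have S_cover : S \subset below :|: above.
  apply/subsetP => u; rewrite !inE => /andP[/andP[neq_uy uY] Evu].
  by rewrite neq_uy uY Evu; have [_ _ ->] := lin'.
have card_above : k < #|above|.
  have := leq_trans (subset_leq_card S_cover) (leq_card_setU below above); lia.
exists ltY'; split=> //.
apply: (k_planar_add_leaf leaf_y kp') => f.
by apply: fan_around_uncrossed lin' yY vX kp' _ card_above; rewrite card_below.
Qed.

End Drawing.

Theorem lemma3p2 (TX TY : finType) (VX : {set TX}) (VY : {set TY})
  (E : TX -> TY -> bool) (ltX : rel TX) (k : nat) (v : TX) (y : TY) :
  strict_linear_on VX ltX ->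
  v \in VX -> 2 * k + 2 < degX VY E v ->
  y \in VY -> E v y -> [set x in VX | E x y] = [set v] ->
  (yes_instance VX VY E ltX k <-> yes_instance VX (VY :\ y) E ltX k).
Proof.
move=> _ vX deg_v yY Evy leaf_y.
have big_fan : 2 * k + 1 < #|[set u in VY :\ y | E v u]|.
  move: deg_v; rewrite /degX (cardsD1 y) !inE yY Evy.
  have -> : [set u in VY | E v u] :\ y = [set u in VY :\ y | E v u].
    by apply/setP => u; rewrite !inE andbA.
  lia.
split; last exact: yes_instance_add_leaf vX yY leaf_y big_fan.
case=> ltY [lin kp]; exists ltY; split.
- exact: strict_linear_onS (subsetDl _ _) lin.
- exact: k_planarS (subsetDl _ _) kp.
Qed.
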